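(* Let $p>1$ and let $\varphi:\mathbb{R}^n\to\mathbb{R}\cup\{+\infty\}$ be proper and lower semicontinuous. Suppose $\bar x=0$ is a $p$-calm point of $\varphi$ with constant $M>0$ and $\varphi(0)=0$. Then for any $\gamma\in\big(0,\frac{2^{1-p}}{Mp}\big)$ and any $\varepsilon>0$ there is a neighborhood $U$ of $0$ such that $\operatorname{prox}^p_{\gamma\varphi}(x)\neq\emptyset$ for all $x\in U$, and if $y\in\operatorname{prox}^p_{\gamma\varphi}(x)$ with $x\in U$, then $\|y\|<\varepsilon$, $\varphi(y)<\varepsilon$, and $\frac1\gamma\|x-y\|^{p-1}<\varepsilon$.
   Context: $\operatorname{prox}^p_{\gamma\varphi}(x):=\operatorname{argmin}_{y}\big(\varphi(y)+\frac{1}{p\gamma}\|x-y\|^p\big)$. A point $\bar x\in\operatorname{dom}\varphi$ is a $p$-calm point of $\varphi$ with constant $M>0$ if $\varphi(x)+M\|x-\bar x\|^p>\varphi(\bar x)$ for all $x\neq\bar x$. *)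

From HB Require Import structures.
From mathcomp Require Import all_boot all_order all_algebra.
From mathcomp Require Import all_classical all_reals all_analysis.
Set Implicit Arguments. Unset Strict Implicit. Unset Printing Implicit Defensive.
Import Order.TTheory GRing.Theory Num.Theory.
Import numFieldNormedType.Exports.
Local Open Scope classical_set_scope.
Local Open Scope ring_scope.

Definition enorm (R : realType) (n : nat) (x : 'rV[R]_n) : R :=
  Num.sqrt (\sum_(i < n) x ord0 i ^+ 2).

Definition proper_fun (R : realType) (n : nat) (phi : 'rV[R]_n -> \bar R) :=
  (forall x, (-oo < phi x)%E) /\ exists x, phi x \is a fin_num.

Definition prox (R : realType) (n : nat) (p gamma : R)
  (phi : 'rV[R]_n -> \bar R) (x : 'rV[R]_n) : set 'rV[R]_n :=
  [set y | forall z, (phi y + ((enorm (x - y) `^ p) / (p * gamma))%:E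
                      <= phi z + ((enorm (x - z) `^ p) / (p * gamma))%:E)%E].

Definition p_calm (R : realType) (n : nat) (p M : R)
  (phi : 'rV[R]_n -> \bar R) (xb : 'rV[R]_n) :=
  phi xb \is a fin_num /\
  forall x, x != xb -> (phi xb < phi x + (M * enorm (x - xb) `^ p)%:E)%E.

(* Calmness at 0 gives [phi z >= - M ||z||^p], and convexity of [t ^ p] gives
   [2^(1-p) ||z||^p <= ||x - z||^p + ||x||^p].  Hence the prox objective
   [z |-> phi z + ||x - z||^p / (p gamma)] is at least
   [c ||z||^p - ||x||^p / (p gamma)] with [c = 2^(1-p) / (p gamma) - M], and
   [c > 0] is exactly the bound on [gamma].  Its value at [z = 0] is
   [||x||^p / (p gamma)], so every [z] doing at least as well as [0] satisfies
   [||z|| <= C ||x||] for a constant [C].  The objective is lower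
   semicontinuous, hence attains its minimum on a compact box, and for any
   minimizer [y] the quantities [||y||], [phi y <= ||x||^p / (p gamma)] and
   [||x - y|| <= (1 + C) ||x||] all vanish as [x] tends to [0]. *)

From HB Require Import structures.
From mathcomp Require Import all_boot all_order all_algebra.
From mathcomp Require Import all_classical all_reals all_analysis.
From mathcomp Require Import ring lra.
From mathcomp Require finmap.

Set Implicit Arguments.
Unset Strict Implicit.
Unset Printing Implicit Defensive.

Import Order.TTheory GRing.Theory Num.Theory.
Import numFieldNormedType.Exports.
Local Open Scope classical_set_scope.
Local Open Scope ring_scope.

Lemma seq_argmin (T : eqType) d (O : orderType d) (f : T -> O) (s : seq T) :
  s != [::] -> exists2 z, z \in s & forall w, w \in s -> (f z <= f w)%O.
Proof.
elim: s => [//|a s IH] _.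
have [->|/IH[z zs zmin]] := eqVneq s [::].
  by exists a => [|w]; rewrite ?mem_seq1 // => /eqP->.
have [faz|fza] := leP (f a) (f z).
  exists a => [|w]; first exact: mem_head.
  by rewrite inE => /predU1P[->//|/zmin]; apply: le_trans.
exists z => [|w]; first by rewrite inE zs orbT.
by rewrite inE => /predU1P[->|/zmin//]; apply: ltW.
Qed.

Lemma lower_semicontinuous_compact_min (T : ptopologicalType)
    (R : realFieldType) (f : T -> \bar R) (K : set T) :
  lower_semicontinuous f -> compact K -> K !=set0 ->
  exists2 y, K y & forall z, K z -> (f y <= f z)%E.
Proof.
(* Without a minimizer the open sets [f > f z], [z \in K], cover [K]; the point
   of a finite subcover with the least value then lies in none of them. *)
move=> lsc_f cK [x0 Kx0]; apply: contrapT => nomin.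
have below y : K y -> exists2 z, K z & (f z < f y)%E.
  move=> Ky; apply: contrapT => ymin; apply: nomin; exists y => // z Kz.
  by rewrite leNgt; apply/negP => fzy; apply: ymin; exists z.
have open_above z : K z -> open [set y | (f z < f y)%E].
  move=> Kz; case fz: (f z) => [r| |].
  - by move/lower_semicontinuousP : lsc_f; apply.
  - suff -> : [set y | (+oo < f y)%E] = set0 by exact: open0.
    by apply/seteqP; split => y //=; rewrite ltNge leey.
  - by have [w _] := below z Kz; rewrite fz ltNge leNye.
move: cK; rewrite compact_cover.
case/(_ T K (fun z => [set y | (f z < f y)%E]) open_above).
  by move=> y /below[z Kz fzy]; exists z.
move=> D DK cover.
have D_neq0 : finmap.enum_fset D != [::].
  have [z Dz _] := cover x0 Kx0.
  by apply: contraTneq Dz => eD; rewrite /in_mem /= /finmap.pred_of_finset eD.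
have [w Dw wmin] := seq_argmin f D_neq0.
have [v Dv fvw] := cover w (set_mem (DK _ Dw)).
by have := wmin v Dv; rewrite leNgt fvw.
Qed.

Lemma lower_semicontinuousD_EFin (T : topologicalType) (R : realFieldType)
    (f : T -> \bar R) (g : T -> R) :
  lower_semicontinuous f -> lower_semicontinuous (fun z => (g z)%:E) ->
  lower_semicontinuous (fun z => f z + (g z)%:E)%E.
Proof.
move=> lsc_f lsc_g z0 a afg.
have [u fz0u gz0u] :
    exists2 u : R, (u%:E < f z0)%E & ((a - u)%:E < (g z0)%:E)%E.
  move: afg; case: (f z0) => [r| |] //=.
  - rewrite -EFinD lte_fin => afg.
    by exists ((r + a - g z0) / 2); rewrite lte_fin; lra.
  - by exists (a - g z0 + 1); rewrite ?ltry // lte_fin; lra.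
have [V1 nV1 hV1] := lsc_f z0 u fz0u.
have [V2 nV2 hV2] := lsc_g z0 _ gz0u.
exists (V1 `&` V2); first exact: filterI.
move=> z [/hV1 fzu /hV2 gzu].
by rewrite -[a](subrKC u) EFinD; apply: lteD.
Qed.

Lemma cauchy_schwarz (R : realDomainType) (I : finType) (a b : I -> R) :
  (\sum_i a i * b i) ^+ 2 <= (\sum_i a i ^+ 2) * (\sum_i b i ^+ 2).
Proof.
set A := \sum_i a i ^+ 2; set B := \sum_i a i * b i; set C := \sum_i b i ^+ 2.
have quad s t : 0 <= s ^+ 2 * A + 2 * s * t * B + t ^+ 2 * C.
  have -> : s ^+ 2 * A + 2 * s * t * B + t ^+ 2 * C =
      \sum_i (s * a i + t * b i) ^+ 2.
    by rewrite !mulr_sumr -!big_split; apply: eq_bigr => i _ /=; ring.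
  by apply: sumr_ge0 => i _; exact: sqr_ge0.
have [A0|A_neq0] := eqVneq A 0.
  suff -> : B = 0 by rewrite A0 expr0n mul0r.
  apply: big1 => i _; suff -> : a i = 0 by rewrite mul0r.
  apply/eqP; rewrite -sqrf_eq0; apply/eqP.
  by apply: (psumr_eq0P _ A0) => // j _; exact: sqr_ge0.
have A_gt0 : 0 < A by rewrite lt_def A_neq0 sumr_ge0 // => i _; exact: sqr_ge0.
rewrite -subr_ge0 -(pmulr_rge0 _ A_gt0).
have -> : A * (A * C - B ^+ 2) =
    B ^+ 2 * A + 2 * B * (- A) * B + (- A) ^+ 2 * C by ring.
exact: quad.
Qed.

Section powR_facts.
Variable R : realType.

Lemma ler_powR2r (q : R) :
  0 < q -> {in Num.nneg &, {mono @powR R ^~ q : x y / x <= y}}.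
Proof. by move=> q0; apply: le_mono_in; exact: gt0_ltr_powR. Qed.

Lemma ltr_powR2r (q : R) :
  0 < q -> {in Num.nneg &, {mono @powR R ^~ q : x y / x < y}}.
Proof. by move=> q0; apply: leW_mono_in; exact: ler_powR2r. Qed.

Lemma powRVK (q b : R) : q != 0 -> 0 <= b -> (b `^ q^-1) `^ q = b.
Proof. by move=> q0 b0; rewrite -powRrM mulVf // powRr1. Qed.

Lemma powR_small (q b : R) : 0 < q -> 0 < b ->
  exists2 d, 0 < d & forall t, 0 <= t -> t < d -> t `^ q < b.
Proof.
move=> q0 b0; exists (b `^ q^-1) => [|t t0 tb]; first exact: powR_gt0.
by rewrite -(powRVK (lt0r_neq0 q0) (ltW b0)) gt0_ltr_powR // nnegrE powR_ge0.
Qed.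

Lemma powRD_le (p a b : R) : 1 <= p -> 0 <= a -> 0 <= b ->
  2 `^ (1 - p) * (a + b) `^ p <= a `^ p + b `^ p.
Proof.
move=> p1 a0 b0.
have midpoint : (2^-1 * a + 2^-1 * b) `^ p <= 2^-1 * a `^ p + 2^-1 * b `^ p.
  rewrite {2 4}(_ : 2^-1 = 1 - 2^-1); last by rewrite {2}(splitr 1) div1r addrK.
  by apply: (convex_powR p1 (Itv01 _ _)) => //=;
    rewrite ?inE/= ?in_itv/= ?andbT // ?invr_ge0// invf_le1 ?ler1n.
have two_pow : 2 `^ (1 - p) * 2 `^ p = 2.
  by rewrite -powRD ?pnatr_eq0 ?implybT // subrK powRr1.
rewrite (_ : a + b = 2 * (2^-1 * a + 2^-1 * b)); last by field.
rewrite powRM ?addr_ge0 ?mulr_ge0 ?invr_ge0 // mulrA two_pow.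
apply: le_trans (ler_wpM2l (ler0n R 2) midpoint) _.
by rewrite mulrDr !mulrA mulfV ?pnatr_eq0 // !mul1r.
Qed.

End powR_facts.

Section euclidean_norm.
Variables (R : realType) (n : nat).
Implicit Types (x y z : 'rV[R]_n).

Lemma enorm_ge0 x : 0 <= enorm x.
Proof. exact: sqrtr_ge0. Qed.

Lemma enorm_sqr x : enorm x ^+ 2 = \sum_(i < n) x ord0 i ^+ 2.
Proof. by rewrite sqr_sqrtr // sumr_ge0 // => i _; exact: sqr_ge0. Qed.

Lemma enorm0 : enorm (0 : 'rV[R]_n) = 0.
Proof. by rewrite /enorm big1 ?sqrtr0 // => i _; rewrite mxE expr0n. Qed.

Lemma enormN x : enorm (- x) = enorm x.
Proof.
by rewrite /enorm; congr Num.sqrt; apply: eq_bigr => i _; rewrite mxE sqrrN.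
Qed.

Lemma enormB x y : enorm (x - y) = enorm (y - x).
Proof. by rewrite -enormN opprB. Qed.

Lemma enormD x y : enorm (x + y) <= enorm x + enorm y.
Proof.
rewrite -ler_sqr ?nnegrE ?addr_ge0 ?enorm_ge0 // sqrrD !enorm_sqr.
rewrite (eq_bigr (fun i =>
    x ord0 i ^+ 2 + (x ord0 i * y ord0 i) *+ 2 + y ord0 i ^+ 2)); last first.
  by move=> i _; rewrite mxE sqrrD.
rewrite !big_split /= -mulr2n lerD2r lerD2l lerMn2r /=.
apply: le_trans (ler_norm _) _.
rewrite -ler_sqr ?nnegrE ?mulr_ge0 ?enorm_ge0 // real_normK ?num_real //.
by rewrite exprMn !enorm_sqr; exact: cauchy_schwarz.
Qed.

Lemma enorm_coord x i : `|x ord0 i| <= enorm x.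
Proof.
rewrite -ler_sqr ?nnegrE ?enorm_ge0 // real_normK ?num_real // enorm_sqr.
by rewrite (bigD1 i) //= lerDl sumr_ge0 // => j _; exact: sqr_ge0.
Qed.

Lemma enorm_le_coord x r : 0 <= r -> (forall i, `|x ord0 i| <= r) ->
  enorm x <= n%:R * r.
Proof.
move=> r0 xr; rewrite -ler_sqr ?nnegrE ?enorm_ge0 ?mulr_ge0 // enorm_sqr.
apply: (@le_trans _ _ (\sum_(i < n) r ^+ 2)).
  by apply: ler_sum => i _; rewrite -real_normK ?num_real // ler_sqr ?nnegrE.
rewrite sumr_const card_ord -[_ *+ n]mulr_natl exprMn ler_wpM2r ?sqr_ge0 //.
by rewrite -natrX ler_nat; case: (n) => // k; rewrite expnS leq_pmulr.
Qed.

Lemma nbhs_enorm_lt x e : 0 < e -> nbhs x [set z | enorm (z - x) < e].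
Proof.
move=> e0; have r0 : 0 < e / n.+1%:R by rewrite divr_gt0.
apply: (filterS _ (nbhsx_ballx _ _ r0)) => z [_ xz] /=.
apply: le_lt_trans (enorm_le_coord (ltW r0) _) _.
  by move=> i; have := xz ord0 i; rewrite /ball /= !mxE distrC => /ltW.
by rewrite mulrA ltr_pdivrMr ?ltr0n // mulrC ltr_pM2l // ltr_nat.
Qed.

Lemma open_enorm_gt x b : open [set z | b < enorm (x - z)].
Proof.
rewrite openE => z0 /= bz0; rewrite /interior.
have : 0 < enorm (x - z0) - b by rewrite subr_gt0.
move/(nbhs_enorm_lt z0); apply: filterS => z /= zz0.
have : enorm (x - z0) <= enorm (x - z) + enorm (z - z0).
  by rewrite -[x - z0](subrKA z) enormD.
lra.
Qed.

Lemma lower_semicontinuous_enorm_powR x (p k : R) : 0 < p -> 0 < k ->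
  lower_semicontinuous (fun z => (enorm (x - z) `^ p / k)%:E).
Proof.
move=> p0 k0; apply/lower_semicontinuousP => a.
have [a_lt0|a_ge0] := ltP a 0.
  suff -> : [set z | (a%:E < (enorm (x - z) `^ p / k)%:E)%E] = setT.
    exact: openT.
  apply/seteqP; split => z //= _.
  by rewrite lte_fin (lt_le_trans a_lt0) // divr_ge0 ?powR_ge0 ?ltW.
suff -> : [set z | (a%:E < (enorm (x - z) `^ p / k)%:E)%E] =
    [set z | (a * k) `^ p^-1 < enorm (x - z)] by exact: open_enorm_gt.
apply: eq_set => z; rewrite lte_fin ltr_pdivlMr //.
rewrite -{1}(powRVK (lt0r_neq0 p0) (mulr_ge0 a_ge0 (ltW k0))).
by rewrite ltr_powR2r // nnegrE ?powR_ge0 ?enorm_ge0.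
Qed.

End euclidean_norm.

Section prox_near_calm_point.
Variables (R : realType) (n : nat) (p M gamma : R) (phi : 'rV[R]_n -> \bar R).
Hypotheses (p_gt1 : 1 < p) (M_gt0 : 0 < M) (gamma_gt0 : 0 < gamma).
Hypotheses (gamma_lt : gamma < 2 `^ (1 - p) / (M * p)).
Hypotheses (calm : p_calm p M phi 0) (phi0 : phi 0 = 0%E).
Hypothesis lsc_phi : lower_semicontinuous phi.

Let p_gt0 : 0 < p := lt_trans ltr01 p_gt1.
Let pg_gt0 : 0 < p * gamma := mulr_gt0 p_gt0 gamma_gt0.

Let prox_obj x z := (phi z + (enorm (x - z) `^ p / (p * gamma))%:E)%E.

Let c := 2 `^ (1 - p) / (p * gamma) - M.

Let c_gt0 : 0 < c.
Proof.
move: gamma_lt; rewrite subr_gt0 !ltr_pdivlMr ?mulr_gt0 //; lra.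
Qed.

Lemma phi_ge_calm z : ((- (M * enorm z `^ p))%:E <= phi z)%E.
Proof.
have [->|z_neq0] := eqVneq z 0.
  by rewrite phi0 enorm0 powR0 ?lt0r_neq0 // mulr0 oppr0.
have := calm.2 z z_neq0; rewrite phi0 subr0.
case: (phi z) => [r| |] //=; rewrite ?leey //.
by rewrite -EFinD lte_fin lee_fin; lra.
Qed.

Let prox_obj_ge x z :
  ((c * enorm z `^ p - enorm x `^ p / (p * gamma))%:E <= prox_obj x z)%E.
Proof.
rewrite (_ : c * _ - _ = - (M * enorm z `^ p) +
    (2 `^ (1 - p) * enorm z `^ p - enorm x `^ p) / (p * gamma)); last first.
  by rewrite /c; field; rewrite !gt_eqF.
rewrite EFinD; apply: leeD; first exact: phi_ge_calm.
rewrite lee_fin ler_pM2r ?invr_gt0 // lerBlDr.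
apply: le_trans (powRD_le (ltW p_gt1) (enorm_ge0 (x - z)) (enorm_ge0 x)).
rewrite ler_wpM2l ?powR_ge0 //.
apply: ge0_ler_powR; rewrite ?nnegrE ?addr_ge0 ?enorm_ge0 ?(ltW p_gt0) //.
by rewrite enormB -{1}(subrK x z) enormD.
Qed.

Let prox_obj0 x : prox_obj x 0 = (enorm x `^ p / (p * gamma))%:E.
Proof. by rewrite /prox_obj phi0 subr0 add0e. Qed.

Let prox_obj_sublevel : exists2 C, 0 <= C &
  forall x z, (prox_obj x z <= prox_obj x 0)%E -> enorm z <= C * enorm x.
Proof.
exists ((2 / (p * gamma * c)) `^ p^-1) => [|x z]; first exact: powR_ge0.
rewrite prox_obj0 => /(le_trans (prox_obj_ge x z)); rewrite lee_fin => le_z.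
rewrite -(ler_powR2r p_gt0) ?nnegrE ?mulr_ge0 ?powR_ge0 ?enorm_ge0 //.
rewrite powRM ?powR_ge0 ?enorm_ge0 // powRVK ?lt0r_neq0 //; last first.
  exact: divr_ge0 (ler0n _ 2) (ltW (mulr_gt0 pg_gt0 c_gt0)).
rewrite -(ler_pM2l c_gt0).
rewrite (_ : c * (_ * _) = 2 * (enorm x `^ p / (p * gamma))); first lra.
by field; rewrite !gt_eqF.
Qed.

Lemma prox_neq0 x : prox p gamma phi x !=set0.
Proof.
have [C C_ge0 sublevel] := prox_obj_sublevel.
pose r := C * enorm x.
pose K := [set z : 'rV[R]_n | forall i, `[- r, r]%classic (z ord0 i)].
have cK : compact K.
  apply: (@rV_compact _ _ (fun=> `[- r, r]%classic)) => i.
  exact: segment_compact.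
have K0 : K 0.
  by move=> i; rewrite /= mxE in_itv /= -ler_norml normr0 mulr_ge0 ?enorm_ge0.
have lsc_obj : lower_semicontinuous (prox_obj x).
  apply: lower_semicontinuousD_EFin lsc_phi _.
  exact: lower_semicontinuous_enorm_powR p_gt0 pg_gt0.
have [y _ ymin] :=
  lower_semicontinuous_compact_min lsc_obj cK (ex_intro _ 0 K0).
exists y => z; have [Kz|Kz] := pselect (K z); first exact: ymin.
rewrite leNgt; apply/negP => zy; apply: Kz => i /=.
rewrite in_itv /= -ler_norml (le_trans (enorm_coord z i)) //.
exact/sublevel/(le_trans (ltW zy))/ymin.
Qed.

Lemma prox_enorm_linear : exists2 C, 0 <= C &
  forall x y, prox p gamma phi x y -> enorm y <= C * enorm x.
Proof.
have [C C_ge0 sublevel] := prox_obj_sublevel.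
by exists C => // x y /(_ 0)/sublevel.
Qed.

Lemma prox_phi_le x y : prox p gamma phi x y ->
  (phi y <= (enorm x `^ p / (p * gamma))%:E)%E.
Proof.
move=> /(_ 0); rewrite phi0 subr0 add0e; apply: le_trans.
by rewrite leeDl // lee_fin divr_ge0 ?powR_ge0 ?ltW.
Qed.

End prox_near_calm_point.

Theorem lemma4 (R : realType) (n : nat) (p M : R)
  (phi : 'rV[R]_n -> \bar R) :
  1 < p -> proper_fun phi -> lower_semicontinuous phi ->
  0 < M -> p_calm p M phi 0 -> phi 0 = 0%E ->
  forall gamma : R, 0 < gamma -> gamma < (2 `^ (1 - p)) / (M * p) ->
  forall eps : R, 0 < eps ->
  exists U : set 'rV[R]_n, nbhs (0 : 'rV[R]_n) U /\
    (forall x, U x -> prox p gamma phi x !=set0) /\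
    (forall x y, U x -> prox p gamma phi x y ->
       enorm y < eps /\ (phi y < eps%:E)%E /\
       (enorm (x - y) `^ (p - 1)) / gamma < eps).
Proof.
move=> p_gt1 _ lsc_phi M_gt0 calm phi0 gamma gamma_gt0 gamma_lt eps eps_gt0.
have p_gt0 : 0 < p := lt_trans ltr01 p_gt1.
have [C C_ge0 prox_le] :=
  prox_enorm_linear p_gt1 M_gt0 gamma_gt0 gamma_lt calm phi0.
have [d1 d1_gt0 small1] :=
  powR_small p_gt0 (mulr_gt0 eps_gt0 (mulr_gt0 p_gt0 gamma_gt0)).
have [d2 d2_gt0 small2] :
    exists2 d, 0 < d & forall t, 0 <= t -> t < d -> t `^ (p - 1) < eps * gamma.
  by apply: powR_small; rewrite ?subr_gt0 ?mulr_gt0.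
pose delta := Num.min d1 (Num.min eps d2 / (1 + C)).
have delta_gt0 : 0 < delta.
  by rewrite lt_min d1_gt0 divr_gt0 ?lt_min ?eps_gt0 ?d2_gt0 // ltr_pwDl.
exists [set x | enorm x < delta]; split.
  by apply: (filterS _ (nbhs_enorm_lt 0 delta_gt0)) => x /=; rewrite subr0.
split=> [x _|x y x_lt yx].
  exact: prox_neq0 p_gt1 M_gt0 gamma_gt0 gamma_lt calm phi0 lsc_phi x.
have x_ge0 := enorm_ge0 x.
have y_le := prox_le x y yx.
have xy_le : enorm (x - y) <= enorm x + enorm y by rewrite -(enormN y) enormD.
move: x_lt; rewrite /= /delta lt_min ltr_pdivlMr ?ltr_pwDl // !lt_min.
case/and3P => x_d1 x_eps x_d2.
split; [lra|split].
  apply: le_lt_trans (prox_phi_le p_gt1 gamma_gt0 phi0 yx) _.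
  by rewrite lte_fin ltr_pdivrMr ?mulr_gt0 // small1.
by rewrite ltr_pdivrMr // small2 ?enorm_ge0 //; lra.
Qed.
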